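(* Let $\Sigma$ be a finite set of disjunctive embedded dependencies over a signature $\tau$. (a) $\Sigma$ is equivalent to a finite set of embedded dependencies iff $\Sigma$ is preserved under direct products (for all $\tau$-structures $\mathcal{A},\mathcal{B}$ that are models of $\Sigma$, $\mathcal{A}\times\mathcal{B}$ is a model of $\Sigma$). (b) $\Sigma$ is equivalent over finite structures to a finite set of embedded dependencies iff $\Sigma$ is preserved under direct products in the finite (for all finite models $\mathcal{A},\mathcal{B}$ of $\Sigma$, $\mathcal{A}\times\mathcal{B}$ is a model of $\Sigma$).
   Context: Signatures are relational (constant and relation symbols). A generalized dependency is a sentence $\forall\vec{x}(\phi(\vec{x})\rightarrow\exists\vec{y}(\psi_1\vee\cdots\vee\psi_n))$, $n\ge0$, with $\phi,\psi_i$ conjunctions of atomic formulas (equalities allowed). It is safe if every universal variable occurring in the head occurs in some relational atom of the body. A disjunctive embedded dependency (DED) is a safe generalized dependency with $n\ge1$; an embedded dependency (ED) is a DED with $n=1$. The direct product $\mathcal{A}\times\mathcal{B}$ has domain $A\times B$, interprets each constant $c$ as $\langle c^{\mathcal A},c^{\mathcal B}\rangle$, and for each $k$-ary relation symbol $R$, $(\langle a_1,b_1\rangle,\dots,\langle a_k,b_k\rangle)\in R^{\mathcal{A}\times\mathcal{B}}$ iff $(a_1,\dots,a_k)\in R^{\mathcal A}$ and $(b_1,\dots,b_k)\in R^{\mathcal B}$. *)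

From Stdlib Require Import List.
Import ListNotations.

Set Implicit Arguments.

Record signature := Signature {
  const_sym : Type;
  rel_sym : Type;
  arity : rel_sym -> nat }.

Inductive term (S : signature) : Type :=
| TVar (x : nat)
| TConst (c : const_sym S).
Arguments TVar {S} x.
Arguments TConst {S} c.

Inductive atom (S : signature) : Type :=
| AEq (t1 t2 : term S)
| ARel (r : rel_sym S) (ts : list (term S)).
Arguments AEq {S} t1 t2.
Arguments ARel {S} r ts.

Definition term_vars {S} (t : term S) : list nat :=
  match t with TVar x => [x] | TConst _ => [] end.

Definition atom_vars {S} (a : atom S) : list nat :=
  match a with
  | AEq t1 t2 => term_vars t1 ++ term_vars t2
  | ARel _ ts => flat_map term_vars ts
  end.

Definition rel_atom_vars {S} (a : atom S) : list nat :=
  match a with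
  | AEq _ _ => []
  | ARel _ ts => flat_map term_vars ts
  end.

Definition atom_wf {S} (a : atom S) : Prop :=
  match a with
  | AEq _ _ => True
  | ARel r ts => length ts = arity S r
  end.

(** A generalized dependency
      forall uvars, (/\ body) -> exists evars, \/_{psi in heads} (/\ psi). *)
Record dependency (S : signature) := Dependency {
  uvars : list nat;
  evars : list nat;
  body : list (atom S);
  heads : list (list (atom S)) }.

Definition dep_wf {S} (d : dependency S) : Prop :=
  (forall a, In a (body d) -> atom_wf a) /\
  (forall psi a, In psi (heads d) -> In a psi -> atom_wf a) /\
  (forall x, In x (uvars d) -> ~ In x (evars d)) /\
  (forall a x, In a (body d) -> In x (atom_vars a) -> In x (uvars d)) /\
  (forall psi a x, In psi (heads d) -> In a psi -> In x (atom_vars a) ->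
     In x (uvars d) \/ In x (evars d)).

Definition dep_safe {S} (d : dependency S) : Prop :=
  forall psi a x, In psi (heads d) -> In a psi -> In x (atom_vars a) ->
    In x (uvars d) ->
    exists b, In b (body d) /\ In x (rel_atom_vars b).

Definition is_DED {S} (d : dependency S) : Prop :=
  dep_wf d /\ dep_safe d /\ heads d <> [].

Definition is_ED {S} (d : dependency S) : Prop :=
  is_DED d /\ length (heads d) = 1.

Record structure (S : signature) := Structure {
  dom : Type;
  dom_inhabited : inhabited dom;
  cinterp : const_sym S -> dom;
  rinterp : rel_sym S -> list dom -> Prop;
  rinterp_arity : forall r l, rinterp r l -> length l = arity S r }.
Arguments dom {S} _.
Arguments cinterp {S} _ _.
Arguments rinterp {S} _ _ _.

Definition finite_structure {S} (A : structure S) : Prop :=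
  exists l : list (dom A), forall x, In x l.

Definition eval_term {S} (A : structure S) (v : nat -> dom A) (t : term S)
  : dom A :=
  match t with TVar x => v x | TConst c => cinterp A c end.

Definition holds {S} (A : structure S) (v : nat -> dom A) (a : atom S) : Prop :=
  match a with
  | AEq t1 t2 => eval_term A v t1 = eval_term A v t2
  | ARel r ts => rinterp A r (map (eval_term A v) ts)
  end.

Definition holds_conj {S} (A : structure S) (v : nat -> dom A)
  (phi : list (atom S)) : Prop :=
  forall a, In a phi -> holds A v a.

Definition satisfies {S} (A : structure S) (d : dependency S) : Prop :=
  forall v : nat -> dom A,
    holds_conj A v (body d) ->
    exists v' : nat -> dom A,
      (forall x, ~ In x (evars d) -> v' x = v x) /\
      exists psi, In psi (heads d) /\ holds_conj A v' psi.

Definition model {S} (A : structure S) (Sigma : list (dependency S)) : Prop :=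
  forall d, In d Sigma -> satisfies A d.

Definition equivalent {S} (Sigma1 Sigma2 : list (dependency S)) : Prop :=
  forall A : structure S, model A Sigma1 <-> model A Sigma2.

Definition fin_equivalent {S} (Sigma1 Sigma2 : list (dependency S)) : Prop :=
  forall A : structure S, finite_structure A ->
    (model A Sigma1 <-> model A Sigma2).

Lemma prod_rinterp_arity {S} (A B : structure S) (r : rel_sym S)
  (l : list (dom A * dom B)) :
  rinterp A r (map fst l) /\ rinterp B r (map snd l) -> length l = arity S r.
Proof.
  intros [HA _]. rewrite <- (length_map fst l). exact (rinterp_arity _ _ _ HA).
Qed.

Definition prod_structure {S} (A B : structure S) : structure S :=
  {| dom := (dom A * dom B)%type;
     dom_inhabited :=
       match dom_inhabited A, dom_inhabited B with
       | inhabits a, inhabits b => inhabits (a, b) end;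
     cinterp := fun c => (cinterp A c, cinterp B c);
     rinterp := fun r l => rinterp A r (map fst l) /\ rinterp B r (map snd l);
     rinterp_arity := @prod_rinterp_arity S A B |}.

Definition preserved_under_products {S} (Sigma : list (dependency S)) : Prop :=
  forall A B : structure S, model A Sigma -> model B Sigma ->
    model (prod_structure A B) Sigma.

Definition preserved_under_products_fin {S} (Sigma : list (dependency S))
  : Prop :=
  forall A B : structure S, finite_structure A -> finite_structure B ->
    model A Sigma -> model B Sigma -> model (prod_structure A B) Sigma.

(* Embedded dependencies are preserved under direct products, because a
   product of witnesses is a witness.  Conversely, suppose Sigma is preserved
   under products and d in Sigma is a DED.  If no single disjunct psi of d
   were valid in every model of Sigma, each psi would have a model P_psi of
   Sigma and a valuation satisfying the body of d but admitting no extension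
   satisfying psi.  The product of the P_psi is again a model of Sigma, and
   the paired valuation satisfies the body of d, yet no extension satisfies
   any disjunct, since such an extension would project to one in some P_psi.
   Hence replacing every d in Sigma by one valid disjunct gives an equivalent
   set of EDs.  As the class of finite structures is closed under products,
   the same argument works in the finite. *)

From Stdlib Require Import List Lia Classical.
Import ListNotations.

Set Implicit Arguments.

Lemma list_choice (X Y : Type) (R : X -> Y -> Prop) (l : list X) :
  (forall x, In x l -> exists y, R x y) ->
  exists l' : list Y,
    (forall x, In x l -> exists y, In y l' /\ R x y) /\
    (forall y, In y l' -> exists x, In x l /\ R x y).
Proof.
  induction l as [|x l IH]; intros Hl.
  - exists []. split; intros _ [].
  - destruct (Hl x (or_introl eq_refl)) as [y Hxy].
    destruct IH as [l' [Hleft Hright]]; [intros z Hz; apply Hl; right; exact Hz|].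
    exists (y :: l'). split.
    + intros z [<- | Hz]; [exists y; split; [left|]; auto|].
      destruct (Hleft z Hz) as [y' [Hy' Hzy']]. exists y'. split; [right|]; auto.
    + intros y' [<- | Hy']; [exists x; split; [left|]; auto|].
      destruct (Hright y' Hy') as [z [Hz Hzy']]. exists z. split; [right|]; auto.
Qed.

Section Products.

Variables (S : signature) (A B : structure S).

Let AB := prod_structure A B.

Definition pair_valuation (v : nat -> dom A) (w : nat -> dom B) : nat -> dom AB :=
  fun x => (v x, w x).

Lemma eval_term_prod (w : nat -> dom AB) (t : term S) :
  eval_term AB w t =
  (eval_term A (fun x => fst (w x)) t, eval_term B (fun x => snd (w x)) t).
Proof. destruct t; simpl; [apply surjective_pairing | reflexivity]. Qed.

Lemma holds_prod (w : nat -> dom AB) (a : atom S) :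
  holds AB w a <->
  holds A (fun x => fst (w x)) a /\ holds B (fun x => snd (w x)) a.
Proof.
  destruct a as [t1 t2 | r ts]; cbn [holds].
  - rewrite (eval_term_prod w t1), (eval_term_prod w t2). apply pair_equal_spec.
  - cbn [AB prod_structure rinterp]. rewrite !map_map.
    erewrite (map_ext (fun t => fst (eval_term AB w t))),
      (map_ext (fun t => snd (eval_term AB w t)));
      [reflexivity | |]; intro t; rewrite eval_term_prod; reflexivity.
Qed.

Lemma holds_conj_prod (w : nat -> dom AB) (phi : list (atom S)) :
  holds_conj AB w phi <->
  holds_conj A (fun x => fst (w x)) phi /\ holds_conj B (fun x => snd (w x)) phi.
Proof.
  unfold holds_conj. split.
  - intros H. split; intros a Ha; apply (holds_prod w a), H, Ha.
  - intros [HA HB] a Ha. apply holds_prod. auto.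
Qed.

Lemma satisfies_prod (d : dependency S) :
  length (heads d) <= 1 -> satisfies A d -> satisfies B d -> satisfies AB d.
Proof.
  intros Hlen HA HB w Hw. apply holds_conj_prod in Hw as [HwA HwB].
  destruct (HA _ HwA) as [vA [agA [psiA [InA HpsiA]]]].
  destruct (HB _ HwB) as [vB [agB [psiB [InB HpsiB]]]].
  exists (pair_valuation vA vB). split.
  - intros x Hx. unfold pair_valuation. rewrite agA, agB by exact Hx.
    symmetry. apply surjective_pairing.
  - destruct (heads d) as [|psi [|]]; [destruct InA | | simpl in Hlen; exfalso; lia].
    destruct InA as [<- | []], InB as [<- | []].
    exists psi. split; [left; reflexivity|]. apply holds_conj_prod. auto.
Qed.

End Products.

Arguments pair_valuation {S A B} v w x.

Lemma finite_structure_prod (S : signature) (A B : structure S) :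
  finite_structure A -> finite_structure B -> finite_structure (prod_structure A B).
Proof.
  intros [lA HA] [lB HB]. exists (list_prod lA lB). intros [a b]. apply in_prod; auto.
Qed.

Section SingleHead.

Variable S : signature.

Definition dep_with_head (d : dependency S) (psi : list (atom S)) : dependency S :=
  Dependency (uvars d) (evars d) (body d) [psi].

Lemma is_ED_dep_with_head (d : dependency S) (psi : list (atom S)) :
  is_DED d -> In psi (heads d) -> is_ED (dep_with_head d psi).
Proof.
  intros [[wf_body [wf_heads [wf_vars [wf_closed_body wf_closed_heads]]]] [safe _]] Hpsi.
  split; [|reflexivity]. split; [|split; [|discriminate]].
  - repeat split; simpl; auto.
    + intros p a [<- | []]. eauto.
    + intros p a x [<- | []]. eauto.
  - intros p a x [<- | []]. eauto.
Qed.

Lemma satisfies_dep_with_head (A : structure S) (d : dependency S) psi :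
  In psi (heads d) -> satisfies A (dep_with_head d psi) -> satisfies A d.
Proof.
  intros Hpsi H v Hv. destruct (H v Hv) as [v' [agree [p [[<- | []] Hp]]]].
  exists v'. split; [exact agree|]. exists psi. auto.
Qed.

End SingleHead.

Definition preserved_in (S : signature) (K : structure S -> Prop)
    (Sigma : list (dependency S)) : Prop :=
  forall A B, K A -> K B -> model A Sigma -> model B Sigma ->
    model (prod_structure A B) Sigma.

Definition equivalent_in (S : signature) (K : structure S -> Prop)
    (Sigma1 Sigma2 : list (dependency S)) : Prop :=
  forall A, K A -> (model A Sigma1 <-> model A Sigma2).

Section ValidDisjunct.

Variables (S : signature) (d : dependency S).

Definition refutes_heads (P : structure S) (w : nat -> dom P)
    (L : list (list (atom S))) : Prop :=
  holds_conj P w (body d) /\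
  forall psi, In psi L -> forall w', (forall x, ~ In x (evars d) -> w' x = w x) ->
    ~ holds_conj P w' psi.

Lemma refutes_heads_prod (A B : structure S) v w L1 L2 :
  refutes_heads A v L1 -> refutes_heads B w L2 ->
  refutes_heads (prod_structure A B) (pair_valuation v w) (L1 ++ L2).
Proof.
  intros [HvA HnA] [HwB HnB]. split; [apply holds_conj_prod; auto|].
  intros psi Hpsi w' agree Hw'. apply holds_conj_prod in Hw' as [H1 H2].
  apply in_app_or in Hpsi as [Hpsi | Hpsi].
  - exact (HnA psi Hpsi _ (fun x Hx => f_equal fst (agree x Hx)) H1).
  - exact (HnB psi Hpsi _ (fun x Hx => f_equal snd (agree x Hx)) H2).
Qed.

Lemma refutes_heads_of_not_satisfies (A : structure S) psi :
  ~ satisfies A (dep_with_head d psi) -> exists w, refutes_heads A w [psi].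
Proof.
  intros Hns. apply NNPP. intros Hnr. apply Hns. intros w Hw.
  apply NNPP. intros Hnext. apply Hnr. exists w. split; [exact Hw|].
  intros p [<- | []] w' agree Hw'. apply Hnext.
  exists w'. split; [exact agree|]. exists psi. split; [left|]; auto.
Qed.

Lemma not_refutes_heads (A : structure S) w :
  satisfies A d -> ~ refutes_heads A w (heads d).
Proof.
  intros Hsat [Hw Hn]. destruct (Hsat w Hw) as [w' [agree [psi [Hpsi Hw']]]].
  exact (Hn psi Hpsi w' agree Hw').
Qed.

Variables (K : structure S -> Prop) (Sigma : list (dependency S)).
Hypothesis K_prod : forall A B, K A -> K B -> K (prod_structure A B).
Hypothesis Sigma_preserved : preserved_in K Sigma.

Definition K_refutes (L : list (list (atom S))) : Prop :=
  exists P w, K P /\ model P Sigma /\ refutes_heads P w L.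

Lemma K_refutes_all L :
  L <> [] -> (forall psi, In psi L -> K_refutes [psi]) -> K_refutes L.
Proof.
  induction L as [|psi L IH]; intros Hne Hall; [congruence|].
  destruct (Hall psi (or_introl eq_refl)) as [A [v [KA [MA Hv]]]].
  destruct L as [|psi' L]; [exists A, v; auto|].
  destruct IH as [B [w [KB [MB Hw]]]];
    [discriminate | intros p Hp; apply Hall; right; exact Hp|].
  exists (prod_structure A B), (pair_valuation v w).
  split; [auto|]. split; [auto|]. exact (refutes_heads_prod Hv Hw).
Qed.

Lemma preserved_valid_disjunct :
  In d Sigma -> heads d <> [] ->
  exists psi, In psi (heads d) /\
    forall A, K A -> model A Sigma -> satisfies A (dep_with_head d psi).
Proof.
  intros Hd Hne. apply NNPP. intros Hnone.
  assert (Hrefuted : K_refutes (heads d)).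
  { apply K_refutes_all; [exact Hne|]. intros psi Hpsi.
    apply NNPP. intros Hnr. apply Hnone. exists psi. split; [exact Hpsi|].
    intros A KA MA. apply NNPP. intros Hns.
    destruct (refutes_heads_of_not_satisfies Hns) as [w Hw].
    apply Hnr. exists A, w. auto. }
  destruct Hrefuted as [P [w [_ [MP Hw]]]].
  exact (not_refutes_heads (MP d Hd) Hw).
Qed.

End ValidDisjunct.

Theorem ED_equivalent_in_iff_preserved_in (S : signature) (K : structure S -> Prop)
    (Sigma : list (dependency S)) :
  (forall A B, K A -> K B -> K (prod_structure A B)) ->
  (forall d, In d Sigma -> is_DED d) ->
  (exists Sigma' : list (dependency S),
      (forall d, In d Sigma' -> is_ED d) /\ equivalent_in K Sigma Sigma')
  <-> preserved_in K Sigma.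
Proof.
  intros K_prod Sigma_DED. split.
  - intros [Sigma' [Sigma'_ED Heq]] A B KA KB MA MB.
    apply Heq; [auto|]. apply Heq in MA; [|exact KA]. apply Heq in MB; [|exact KB].
    intros d Hd. destruct (Sigma'_ED d Hd) as [_ Hlen].
    apply satisfies_prod; auto. rewrite Hlen. auto.
  - intros Hpres.
    destruct (@list_choice _ _
      (fun d d' => is_ED d' /\ (forall A, satisfies A d' -> satisfies A d) /\
                   forall A, K A -> model A Sigma -> satisfies A d')
      Sigma) as [Sigma' [Hcover Hsound]].
    + intros d Hd. destruct (Sigma_DED d Hd) as [_ [_ Hne]].
      destruct (preserved_valid_disjunct d K_prod Hpres Hd Hne) as [psi [Hpsi Hvalid]].
      exists (dep_with_head d psi). split; [|split].
      * apply is_ED_dep_with_head; auto.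
      * intros A. apply satisfies_dep_with_head. exact Hpsi.
      * exact Hvalid.
    + exists Sigma'. split.
      * intros d' Hd'. destruct (Hsound d' Hd') as [d [_ [HED _]]]. exact HED.
      * intros A KA. split.
        -- intros MA d' Hd'. destruct (Hsound d' Hd') as [d [_ [_ [_ Hvalid]]]]. auto.
        -- intros MA d Hd. destruct (Hcover d Hd) as [d' [Hd' [_ [Hweaker _]]]]. auto.
Qed.

Theorem theorem3 (S : signature) (Sigma : list (dependency S)) :
  (forall d, In d Sigma -> is_DED d) ->
  ((exists Sigma' : list (dependency S),
       (forall d, In d Sigma' -> is_ED d) /\ equivalent Sigma Sigma')
     <-> preserved_under_products Sigma) /\
  ((exists Sigma' : list (dependency S),
       (forall d, In d Sigma' -> is_ED d) /\ fin_equivalent Sigma Sigma')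
     <-> preserved_under_products_fin Sigma).
Proof.
  intros Sigma_DED. split.
  - pose proof (@ED_equivalent_in_iff_preserved_in S (fun _ => True) Sigma
                  (fun _ _ _ _ => I) Sigma_DED) as Hchar.
    split.
    + intros [Sigma' [Sigma'_ED Heq]] A B MA MB.
      apply Hchar; [exists Sigma'; split; [exact Sigma'_ED | intros C _; apply Heq] | ..];
        auto.
    + intros Hpres.
      destruct (proj2 Hchar (fun A B _ _ => Hpres A B)) as [Sigma' [Sigma'_ED Heq]].
      exists Sigma'. split; [exact Sigma'_ED | intros A; exact (Heq A I)].
  - exact (ED_equivalent_in_iff_preserved_in finite_structure Sigma
             (@finite_structure_prod S) Sigma_DED).
Qed.
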